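(* Let $X$ be a real vector space and let $A,B\subseteq X$ be two disjoint convex sets such that $A$ is vectorially closed and relatively solid. Suppose moreover that $B\subseteq Y$ for some finite-dimensional subspace $Y$ of $X$ and that $B$ is compact in $Y$ (with its usual Euclidean topology). Then $A$ and $B$ can be strongly separated by some $f\in X'$, i.e. there is $f\in X'$ with $\sup_{a\in A}f(a)<\inf_{b\in B}f(b)$.
   Context: $X'$ is the algebraic dual of $X$. For $C\subseteq X$: $vcl(C):=\{b\in X:\ \exists x\in X \text{ such that } \forall\lambda'>0\ \exists\lambda\in[0,\lambda'] \text{ with } b+\lambda x\in C\}$; $C$ is vectorially closed if $vcl(C)=C$; $C$ is relatively solid if $icr(C)\ne\emptyset$, where $icr(C):=\{x\in C:\ \forall x'\in span(C-C)\ \exists \lambda'>0 \text{ with } x+\lambda x'\in C\ \forall\lambda\in[0,\lambda']\}$. *)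

From HB Require Import structures.
From mathcomp Require Import all_boot all_order all_algebra.
From mathcomp Require Import all_classical all_reals all_analysis.
Set Implicit Arguments. Unset Strict Implicit. Unset Printing Implicit Defensive.
Import Order.TTheory GRing.Theory Num.Theory.
Local Open Scope ring_scope.
Local Open Scope classical_set_scope.

Section Defs.
Variables (R : realType) (X : lmodType R).

Definition lspan (S : set X) : set X :=
  [set x | exists (n : nat) (c : 'I_n -> R) (v : 'I_n -> X),
      (forall i, S (v i)) /\ x = \sum_(i < n) c i *: v i].

Definition setdiff_mink (C : set X) : set X :=
  [set z | exists x y, C x /\ C y /\ z = x - y].

Definition vcl (C : set X) : set X :=
  [set b | exists x : X, forall l' : R, 0 < l' ->
     exists l : R, 0 <= l /\ l <= l' /\ C (b + l *: x)].

Definition vectorially_closed (C : set X) : Prop := vcl C = C.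

Definition icr (C : set X) : set X :=
  [set x | C x /\ forall x', lspan (setdiff_mink C) x' ->
     exists l' : R, 0 < l' /\ forall l : R, 0 <= l -> l <= l' -> C (x + l *: x')].

Definition relatively_solid (C : set X) : Prop := icr C !=set0.

Definition lin_indep (n : nat) (e : 'I_n -> X) : Prop :=
  forall c : 'I_n -> R, \sum_(i < n) c i *: e i = 0 -> forall i, c i = 0.

End Defs.

(* Fix a0 in the relative algebraic interior of A. The Minkowski gauge of A - a0 is sublinear
   on span (A - A), and since A is vectorially closed every b outside A has gauge b - a0 > 1,
   so Hahn-Banach gives a functional F with F (A - a0) <= 1 < F (b - a0). By compactness of B
   finitely many such F_j, with margins m_j > 1, cover B: each b in B has F_j (b - a0) > m_j
   for some j. The theorem of Fan, Glicksberg and Hoffman (itself obtained by separating 0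
   from a convex set in R^k with the same gauge argument) turns this into weights
   lam_j >= 0, not all zero, with sum_j lam_j (F_j (b - a0) - m_j) >= 0 on B; then
   f = sum_j lam_j F_j gives sup f(A) <= f a0 + sum lam < f a0 + sum lam_j m_j <= inf f(B). *)

From HB Require Import structures.
From mathcomp Require Import all_boot all_order all_algebra.
From mathcomp Require Import all_classical all_reals all_analysis.
From mathcomp Require Import ring lra.
Set Implicit Arguments. Unset Strict Implicit. Unset Printing Implicit Defensive.
Import Order.TTheory GRing.Theory Num.Theory.
Import numFieldNormedType.Exports.
Local Open Scope ring_scope.
Local Open Scope classical_set_scope.

Section LinearSets.
Variables (R : realType) (X : lmodType R).

Definition is_subspace (L : set X) :=
  [/\ L 0, forall x y, L x -> L y -> L (x + y) & forall a x, L x -> L (a *: x)].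

Definition is_convex (C : set X) :=
  forall x y l, 0 <= l -> l <= 1 -> C x -> C y -> C (l *: x + (1 - l) *: y).

Definition convex_on (C : set X) (h : X -> R) :=
  forall x y l, 0 <= l -> l <= 1 -> C x -> C y ->
    h (l *: x + (1 - l) *: y) <= l * h x + (1 - l) * h y.

Definition sublinear_on (L : set X) (p : X -> R) :=
  (forall x y, L x -> L y -> p (x + y) <= p x + p y) /\
  (forall s x, 0 < s -> L x -> p (s *: x) = s * p x).

Definition linear_of (f : X -> R^o) (f_lin : linear f) : {linear X -> R^o} :=
  HB.pack_for {linear X -> R^o} f (GRing.isLinear.Build R X R^o *:%R f f_lin).

Lemma is_convex_convex_set (C : set X) : convex_set (C : set (convex_lmodType X)) -> is_convex C.
Proof.
move=> convC x y l l0 l1 Cx Cy.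
exact/set_mem/(convC x y (Itv01 l0 l1) (mem_set Cx) (mem_set Cy)).
Qed.

Lemma lspan_subspace (S : set X) : is_subspace (lspan S).
Proof.
split.
- by exists 0%N, (fun _ => 0), (fun _ => 0); split; [case|rewrite big_ord0].
- move=> _ _ [n1 [c1 [v1 [Sv1 ->]]]] [n2 [c2 [v2 [Sv2 ->]]]].
  pose glue T (f1 : 'I_n1 -> T) (f2 : 'I_n2 -> T) i :=
    match fintype.split i with inl j => f1 j | inr j => f2 j end.
  exists (n1 + n2)%N, (glue _ c1 c2), (glue _ v1 v2); split.
    by move=> i; rewrite /glue; case: (fintype.split i).
  rewrite big_split_ord /glue; congr (_ + _); apply: eq_bigr => i _.
    by rewrite (unsplitK (inl _ i)).
  by rewrite (unsplitK (inr _ i)).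
- move=> a _ [n1 [c1 [v1 [Sv1 ->]]]].
  exists n1, (fun i => a * c1 i), v1; split => //.
  by rewrite scaler_sumr; apply: eq_bigr => i _; rewrite scalerA.
Qed.

Lemma lspan_coord (n : nat) (e : 'I_n -> X) b :
  lspan [set x | exists i, x = e i] b ->
  exists c : 'rV[R]_n, b = \sum_(i < n) c ord0 i *: e i.
Proof.
move=> [N [d [w [ew ->]]]]; have [g wg] := choice ew.
exists (\row_j \sum_(i < N | g i == j) d i).
rewrite (partition_big g xpredT) //=; apply: eq_bigr => j _.
by rewrite mxE scaler_suml; apply: eq_bigr => i /eqP <-; rewrite wg.
Qed.

End LinearSets.

Section LinearGraph.
Variables (R : realType) (X : lmodType R).

Definition linear_graph (G : set (X * R)) :=
  [/\ forall x a b, G (x, a) -> G (x, b) -> a = b,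
      forall x y a b, G (x, a) -> G (y, b) -> G (x + y, a + b) &
      forall s x a, G (x, a) -> G (s *: x, s * a)].

Definition graph_extension (G : set (X * R)) (x : X) (c : R) : set (X * R) :=
  [set z | exists m a t, G (m, a) /\ z = (m + t *: x, a + t * c)].

Lemma linear_graphB G m a m' a' : linear_graph G -> G (m, a) -> G (m', a') ->
  G (m - m', a - a').
Proof.
move=> [_ Gadd Ghom] Gm Gm'.
by have := Gadd _ _ _ _ Gm (Ghom (-1) _ _ Gm'); rewrite scaleN1r mulN1r.
Qed.

Lemma linear_graph_extension G x c : linear_graph G -> ~ (exists a, G (x, a)) ->
  linear_graph (graph_extension G x c).
Proof.
move=> linG Gx; have [Gfun Gadd Ghom] := linG; split.
- move=> y b b' [m [a [t [Gm [-> ->]]]]] [m' [a' [t' [Gm' [yE ->]]]]].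
  have [tt'|tt'] := eqVneq t t'.
    by move: yE Gm'; rewrite tt' => /addIr <- /(Gfun _ _ _ Gm) ->.
  exfalso; apply: Gx; exists ((t - t')^-1 * (a' - a)).
  have -> : x = (t - t')^-1 *: (m' - m).
    have <- : (t - t') *: x = m' - m.
      by rewrite scalerBl; apply: (addrI m); rewrite addrA yE addrK addrC subrK.
    by rewrite scalerA mulVf ?subr_eq0 // scale1r.
  by apply: Ghom; apply: linear_graphB.
- move=> y y' b b' [m [a [t [Gm [-> ->]]]]] [m' [a' [t' [Gm' [-> ->]]]]].
  exists (m + m'), (a + a'), (t + t'); split; first exact: Gadd.
  by rewrite scalerDl mulrDl; congr (_, _); rewrite addrACA.
- move=> s y b [m [a [t [Gm [-> ->]]]]].
  exists (s *: m), (s * a), (s * t); split; first exact: Ghom.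
  by rewrite scalerDr mulrDr scalerA mulrA.
Qed.

End LinearGraph.

Lemma exists_between (R : realType) (S T : set R) :
  (forall s t, S s -> T t -> s <= t) -> (S !=set0 <-> T !=set0) ->
  exists c, ubound S c /\ lbound T c.
Proof.
move=> ST [ST0 TS0]; have [S0|S0] := pselect (S !=set0).
- have [t Tt] := ST0 S0; exists (sup S); split.
    by apply: sup_upper_bound; split => //; exists t => s Ss; exact: ST.
  by move=> t' Tt'; apply: ge_sup => // s Ss; exact: ST.
- by exists 0; split => y Sy; exfalso; [apply: S0 | apply: S0; apply: TS0]; exists y.
Qed.

Section HahnBanach.
Variables (R : realType) (X : lmodType R) (L : set X) (p : X -> R).
Hypotheses (subL : is_subspace L) (subp : sublinear_on L p).

(* Domination is only required on the subspace L while the extension is defined on all of X: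
   the gauge of a convex set is in general finite only on the span of that set. *)
Definition dominated (G : set (X * R)) := forall x a, G (x, a) -> L x -> a <= p x.

Lemma sublinear0 : p 0 = 0.
Proof.
have [L0 _ _] := subL; have [_ phom] := subp.
by have := phom 2 0 (ltr0Sn _ 1) L0; rewrite scaler0 => ?; lra.
Qed.

Lemma dominated_ray G x c : linear_graph G ->
  (forall m a, G (m, a) -> L (m + x) -> a + c <= p (m + x)) ->
  forall t m a, 0 < t -> G (m, a) -> L (m + t *: x) -> a + t * c <= p (m + t *: x).
Proof.
have [_ _ LZ] := subL; have [_ phom] := subp.
move=> [_ _ Ghom] Gbound t m a t0 Gm Lm.
have tE : t^-1 *: (m + t *: x) = t^-1 *: m + x.
  by rewrite scalerDr scalerA mulVf ?gt_eqF // scale1r.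
have := Gbound _ _ (Ghom t^-1 _ _ Gm); rewrite -tE => /(_ (LZ _ _ Lm)).
rewrite phom ?invr_gt0 // => /(ler_wpM2l (ltW t0)).
by rewrite mulrDr !mulrA mulfV ?gt_eqF // !mul1r.
Qed.

Lemma exists_extension_slope G x : linear_graph G -> dominated G ->
  exists c, forall t m a, G (m, a) -> L (m + t *: x) -> a + t * c <= p (m + t *: x).
Proof.
have [_ LD LZ] := subL; have [psub _] := subp.
move=> linG domG; have [_ Gadd Ghom] := linG.
have GN m a : G (m, a) -> G (- m, - a) by move/(Ghom (-1)); rewrite scaleN1r mulN1r.
have LN y : L y -> L (- y) by move/(LZ (-1)); rewrite scaleN1r.
pose S := [set r | exists m a, [/\ G (m, a), L (m - x) & r = a - p (m - x)]].
pose T := [set r | exists m a, [/\ G (m, a), L (m + x) & r = p (m + x) - a]].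
have ST s t : S s -> T t -> s <= t.
  move=> [m [a [Gm Lm ->]]] [m' [a' [Gm' Lm' ->]]].
  have mE : m - x + (m' + x) = m + m' by rewrite addrACA addNr addr0.
  have := domG _ _ (Gadd _ _ _ _ Gm Gm'); rewrite -mE => /(_ (LD _ _ Lm Lm')).
  by have := psub _ _ Lm Lm'; lra.
have ST0 : S !=set0 <-> T !=set0.
  split=> -[_ [m [a [Gm Lm _]]]].
    exists (p (- m + x) - - a), (- m), (- a); split=> //; first exact: GN.
    by have := LN _ Lm; rewrite opprB addrC.
  exists (- a - p (- m - x)), (- m), (- a); split=> //; first exact: GN.
  by have := LN _ Lm; rewrite opprD.
have [c [Sc Tc]] := exists_between ST ST0; exists c => t m a Gm.
case: (ltrgt0P t) => [t0|t0|->] Lm.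
- apply: (dominated_ray linG _ t0 Gm Lm) => m' a' Gm' Lm'.
  by have := Tc _ (ex_intro _ m' (ex_intro _ a' (And3 Gm' Lm' erefl))); lra.
- have tE : t *: x = - t *: - x by rewrite scalerN scaleNr opprK.
  have t0' : 0 < - t by rewrite oppr_gt0.
  rewrite tE in Lm *; rewrite -mulrNN.
  apply: (dominated_ray linG _ t0' Gm Lm) => m' a' Gm' Lm'.
  by have := Sc _ (ex_intro _ m' (ex_intro _ a' (And3 Gm' Lm' erefl))); lra.
- by rewrite scale0r mul0r !addr0; apply: domG; rewrite scale0r addr0 in Lm.
Qed.

Section Extension.
Variables (v : X) (al : R).
Hypothesis line_bound : forall t, L (t *: v) -> t * al <= p (t *: v).

Let line := [set z | exists t, z = (t *: v, t * al)].
Let admissible (H : set (X * R)) := linear_graph (H `|` line) /\ dominated (H `|` line).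

Lemma admissible0 : admissible set0.
Proof.
rewrite /admissible set0U; split; last by move=> x a [t [-> ->]]; exact: line_bound.
have [L0 _ _] := subL; split.
- move=> x a b [t [-> ->]] [s [xE ->]].
  have [->|ts] := eqVneq t s; first by [].
  have /eqP : (t - s) *: v = 0 by rewrite scalerBl xE subrr.
  rewrite scaler_eq0 subr_eq0 (negbTE ts) /= => /eqP v0.
  have := line_bound (t := 1); have := line_bound (t := -1).
  rewrite v0 !scaler0 sublinear0 => /(_ L0) ? /(_ L0) ?.
  suff -> : al = 0 by rewrite !mulr0.
  lra.
- by move=> x y a b [t [-> ->]] [s [-> ->]]; exists (t + s); rewrite scalerDl mulrDl.
- by move=> s x a [t [-> ->]]; exists (s * t); rewrite scalerA mulrA.
Qed.

Lemma admissible_chain (F : set (set (X * R))) : F `<=` admissible ->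
  total_on F subset -> admissible (\bigcup_(H in F) H).
Proof.
move=> Fadm Ftot; set U := \bigcup_(H in F) H `|` line.
have common z1 z2 : U z1 -> U z2 ->
    exists2 G, linear_graph G /\ dominated G & [/\ G z1, G z2 & G `<=` U].
  have sub H : F H -> H `|` line `<=` U by move=> FH z [Hz|lz]; [left; exists H|right].
  move=> [[H1 FH1 z1H]|z1l] [[H2 FH2 z2H]|z2l].
  - have [H12|H21] := Ftot _ _ FH1 FH2.
      by exists (H2 `|` line); [exact: Fadm|split; [left; exact: H12|left|exact: sub]].
    by exists (H1 `|` line); [exact: Fadm|split; [left|left; exact: H21|exact: sub]].
  - by exists (H1 `|` line); [exact: Fadm|split; [left|right|exact: sub]].
  - by exists (H2 `|` line); [exact: Fadm|split; [right|left|exact: sub]].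
  - have [lin0 dom0] := admissible0; rewrite set0U in lin0 dom0.
    by exists line; [|split=> // z lz; right].
split; first split.
- move=> x a b z1 z2; have [G [[Gfun _ _] _] [Gz1 Gz2 _]] := common _ _ z1 z2.
  exact: Gfun Gz1 Gz2.
- move=> x y a b z1 z2; have [G [[_ Gadd _] _] [Gz1 Gz2 GU]] := common _ _ z1 z2.
  exact/GU/Gadd.
- move=> s x a z1; have [G [[_ _ Ghom] _] [Gz1 _ GU]] := common _ _ z1 z1.
  exact/GU/Ghom.
- move=> x a z1; have [G [_ domG] [Gz1 _ _]] := common _ _ z1 z1.
  exact: domG.
Qed.

Lemma maximal_admissible_total H : admissible H ->
  (forall H', H `<` H' -> ~ admissible H') -> forall x, exists a, (H `|` line) (x, a).
Proof.
move=> [linH domH] Hmax x; apply: contrapT => Hx.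
have [c cbound] := exists_extension_slope x linH domH.
pose E := graph_extension (H `|` line) x c.
have HE : H `|` line `<=` E.
  by move=> [m a] Hm; exists m, a, 0; split => //; rewrite scale0r mul0r !addr0.
have lineE : E `|` line = E by apply/setUidl => z lz; apply: HE; right.
apply: (Hmax E).
  split; first by move=> z Hz; apply: HE; left.
  move=> EH; apply: Hx; exists c; left; apply: EH.
  by exists 0, 0, 1; split; [right; exists 0; rewrite scale0r mul0r|rewrite !add0r scale1r mul1r].
rewrite /admissible lineE; split; first exact: linear_graph_extension.
by move=> _ _ [m [a [t [Hm [-> ->]]]]]; exact: cbound.
Qed.

Theorem hahn_banach :
  exists f : {linear X -> R^o}, f v = al /\ forall x, L x -> f x <= p x.
Proof.
have [H [Hadm Hmax]] := Zorn_bigcup admissible_chain.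
have [f Hf] := choice (maximal_admissible_total Hadm Hmax).
have [[Hfun Hadd Hhom] domH] := Hadm.
have f_lin : linear (f : X -> R^o).
  by move=> a x y; apply: (Hfun (a *: x + y)) => //; apply: Hadd => //; apply: Hhom.
exists (linear_of f_lin); split; last by move=> x; apply: domH.
by apply: (Hfun v) => //; right; exists 1; rewrite scale1r mul1r.
Qed.

End Extension.

Corollary hahn_banach_nonneg v c : (forall x, L x -> 0 <= p x) -> 0 <= c ->
  (L v -> c <= p v) -> exists f : {linear X -> R^o}, f v = c /\ forall x, L x -> f x <= p x.
Proof.
move=> p_ge0 c_ge0 cv; apply: hahn_banach => t.
have [_ _ LZ] := subL; have [_ phom] := subp.
case: (ltrgt0P t) => [t_gt0|t_lt0|->] Ltv.
- have Lv : L v by have := LZ t^-1 _ Ltv; rewrite scalerA mulVf ?gt_eqF // scale1r.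
  by rewrite phom // ler_pM2l // cv.
- by apply: le_trans (p_ge0 _ Ltv); rewrite nmulr_rle0.
- by rewrite mul0r scale0r sublinear0.
Qed.

End HahnBanach.

Section Minkowski.
Variables (R : realType) (X : lmodType R).

(* When no dilate of K contains x the infimum is over the empty set, which [inf] sends to 0. *)
Definition minkowski (K : set X) (x : X) := inf [set t : R | 0 < t /\ K (t^-1 *: x)].

Variables (K L : set X).
Hypotheses (K0 : K 0) (convK : is_convex K) (subL : is_subspace L)
  (absorbK : forall x, L x -> exists2 e, 0 < e & K (e *: x)).

Let scalings x := [set t : R | 0 < t /\ K (t^-1 *: x)].

Let scalings_up x t t' : 0 < t -> t <= t' -> K (t^-1 *: x) -> K (t'^-1 *: x).
Proof.
move=> t0 tt' Kx; have t'0 : 0 < t' by apply: lt_le_trans tt'.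
have := convK (l := t / t') _ _ Kx K0.
rewrite scaler0 addr0 scalerA mulrAC mulfV ?gt_eqF // mul1r; apply.
  by rewrite divr_ge0 // ltW.
by rewrite ler_pdivrMr // mul1r.
Qed.

Let scalings_neq0 x : L x -> scalings x !=set0.
Proof. by move=> /absorbK [e e0 Kx]; exists e^-1; split; rewrite ?invrK ?invr_gt0. Qed.

Lemma minkowski_ge0 x : L x -> 0 <= minkowski K x.
Proof. by move=> Lx; apply: lb_le_inf; [exact: scalings_neq0|move=> t [/ltW]]. Qed.

Lemma minkowski_le x t : 0 < t -> K (t^-1 *: x) -> minkowski K x <= t.
Proof. by move=> t0 Kx; apply: ge_inf; [exists 0 => s [/ltW]|split]. Qed.

Lemma minkowski_lt x t : L x -> minkowski K x < t -> K (t^-1 *: x).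
Proof.
move=> Lx /(inf_lt (scalings_neq0 Lx)) [t' [t'0 Kx] t't].
exact: scalings_up (ltW t't) Kx.
Qed.

Lemma minkowski_le1 x : K x -> minkowski K x <= 1.
Proof. by move=> Kx; apply: minkowski_le => //; rewrite invr1 scale1r. Qed.

Lemma minkowski_lt1 x : L x -> minkowski K x < 1 -> K x.
Proof. by move=> Lx /(minkowski_lt Lx); rewrite invr1 scale1r. Qed.

Let minkowski_scale_le s x : 0 < s -> L x -> minkowski K (s *: x) <= s * minkowski K x.
Proof.
move=> s0 Lx; rewrite -ler_pdivrMl //.
apply: lb_le_inf; first exact: scalings_neq0.
move=> t [t0 Kx]; rewrite ler_pdivrMl //; apply: minkowski_le; first exact: mulr_gt0.
by rewrite scalerA invfM mulrAC mulVf ?gt_eqF // mul1r.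
Qed.

Let minkowski_scale s x : 0 < s -> L x -> minkowski K (s *: x) = s * minkowski K x.
Proof.
have [_ _ LZ] := subL; move=> s0 Lx; apply/eqP; rewrite eq_le minkowski_scale_le //=.
have := minkowski_scale_le (s := s^-1) (x := s *: x).
rewrite invr_gt0 scalerA mulVf ?gt_eqF // scale1r => /(_ s0 (LZ _ _ Lx)).
by move=> /(ler_wpM2l (ltW s0)); rewrite mulrA mulfV ?gt_eqF // mul1r.
Qed.

Let minkowski_add x y : L x -> L y ->
  minkowski K (x + y) <= minkowski K x + minkowski K y.
Proof.
move=> Lx Ly.
have sum_le t t' : scalings x t -> scalings y t' -> minkowski K (x + y) <= t + t'.
  move=> [t0 Kx] [t'0 Ky]; have tt'0 : 0 < t + t' by rewrite addr_gt0.
  apply: minkowski_le => //.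
  have := convK (l := t / (t + t')) _ _ Kx Ky.
  rewrite !scalerA (_ : 1 - t / (t + t') = t' / (t + t')); last first.
    apply: (mulIf (lt0r_neq0 tt'0)).
    by rewrite mulrBl !mulfVK ?gt_eqF // mul1r addrAC subrr add0r.
  rewrite mulrAC mulfV ?gt_eqF // mul1r mulrAC mulfV ?gt_eqF // mul1r -scalerDr.
  apply; first by rewrite divr_ge0 // ltW.
  by rewrite ler_pdivrMr // mul1r lerDl ltW.
have : minkowski K (x + y) - minkowski K x <= minkowski K y.
  apply: lb_le_inf; first exact: scalings_neq0.
  move=> t' yt'; rewrite lerBlDr -lerBlDl; apply: lb_le_inf; first exact: scalings_neq0.
  by move=> t xt; rewrite lerBlDr; apply: sum_le.
lra.
Qed.

Lemma minkowski_sublinear : sublinear_on L (minkowski K).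
Proof. by split=> [x y|s x]; [exact: minkowski_add|exact: minkowski_scale]. Qed.

End Minkowski.

Section RelativeCoreSeparation.
Variables (R : realType) (X : lmodType R) (A : set X) (a0 : X).
Hypotheses (convA : is_convex A) (a0core : icr A a0).

Let L := lspan (setdiff_mink A).
Let K := [set x | A (a0 + x)].
Let p := minkowski K.

Let K0 : K 0.
Proof. by rewrite /K /= addr0; case: a0core. Qed.

Let convK : is_convex K.
Proof.
move=> x y l l0 l1 Kx Ky; rewrite /K /=.
have := convA l0 l1 Kx Ky.
by rewrite !scalerDr addrACA -scalerDl addrC addrCA subrr addr0 scale1r addrC.
Qed.

Let absorbK x : L x -> exists2 e, 0 < e & K (e *: x).
Proof.
move=> Lx; case: a0core => _ /(_ x Lx) [l' [l'0 Al']].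
by exists l' => //; apply: Al' => //; exact: ltW.
Qed.

Let subL : is_subspace L. Proof. exact: lspan_subspace. Qed.

Let L_shift a : A a -> L (a - a0).
Proof.
move=> Aa; exists 1%N, (fun _ => 1), (fun _ => a - a0); split.
  by move=> _; exists a, a0; split => //; case: a0core.
by rewrite big_ord1 scale1r.
Qed.

Let separating_functional v c : 0 <= c -> (L v -> c <= p v) ->
  exists f : {linear X -> R^o}, f v = c /\ forall a, A a -> f (a - a0) <= 1.
Proof.
move=> c0 cv.
have [f [fv fp]] := hahn_banach_nonneg subL (minkowski_sublinear convK subL absorbK)
  (minkowski_ge0 absorbK) c0 cv.
exists f; split => // a Aa; apply: le_trans (fp _ (L_shift Aa)) _.
by apply: minkowski_le1; rewrite /K /= addrC subrK.
Qed.

Theorem relative_core_separation b : ~ A b ->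
  exists f : {linear X -> R^o}, 1 <= f (b - a0) /\ forall a, A a -> f (a - a0) <= 1.
Proof.
move=> Ab; have [|f [fb fA]] := separating_functional (v := b - a0) ler01; last first.
  by exists f; rewrite fb.
move=> Lb; rewrite leNgt; apply/negP => /(minkowski_lt1 K0 convK absorbK Lb).
by rewrite /K /= addrC subrK.
Qed.

Hypothesis vclA : vectorially_closed A.

Let minkowski_gt1 b : ~ A b -> L (b - a0) -> 1 < p (b - a0).
Proof.
(* Otherwise a0 + s (b - a0) lies in A for 0 < s < 1, so b is in vcl A = A. *)
move=> Ab Lb; rewrite ltNge; apply/negP => p_le1; apply: Ab.
rewrite -vclA; exists (a0 - b) => l' l'0.
have l'1 : 0 < 1 + l' by rewrite addr_gt0.
pose l := l' / (1 + l').
have l_lt1 : l < 1 by rewrite ltr_pdivrMr // mul1r ltrDr.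
exists l; split; [by rewrite divr_ge0 // ltW|split].
  by rewrite ler_pdivrMr // mulrDr mulr1 lerDl mulr_ge0 // ltW.
have : 1 < (1 - l)^-1 by rewrite invf_gt1 ?subr_gt0 // ltrBlDr ltrDl divr_gt0.
move=> /(le_lt_trans p_le1) /(minkowski_lt K0 convK absorbK Lb).
rewrite invrK /K /=.
suff -> : b + l *: (a0 - b) = a0 + (1 - l) *: (b - a0) by [].
rewrite -[a0 - b]opprB scalerN scalerBl scale1r addrA.
by congr (_ - _); rewrite addrC subrK.
Qed.

Theorem vclosed_relative_core_separation b : ~ A b ->
  exists f : {linear X -> R^o}, 1 < f (b - a0) /\ forall a, A a -> f (a - a0) <= 1.
Proof.
move=> Ab; have [Lb|Lb] := pselect (L (b - a0)).
  have := minkowski_gt1 Ab Lb => p_gt1.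
  have [|f [fb fA]] := separating_functional (v := b - a0) (ltW (lt_trans ltr01 p_gt1)).
    by [].
  by exists f; rewrite fb.
(* Off span (A - A) the value at b - a0 is unconstrained. *)
have [|f [fb fA]] := separating_functional (v := b - a0) (ler0n _ 2) => //.
by exists f; rewrite fb ltr1n.
Qed.

End RelativeCoreSeparation.

Section RealInequalities.
Variable R : realType.

Lemma ray_ge0 (a b : R) : (forall s, 0 < s -> 0 <= a + s * b) -> 0 <= a /\ 0 <= b.
Proof.
move=> ray; split; rewrite leNgt; apply/negP.
- move=> a_lt0; have [b_le0|b_gt0] := leP b 0.
    by have := ray 1 ltr01; rewrite mul1r; lra.
  have := ray (- a / (2 * b)); rewrite divr_gt0 ?mulr_gt0 ?oppr_gt0 // => /(_ isT).
  have -> : - a / (2 * b) * b = - a / 2 by field; rewrite gt_eqF.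
  lra.
- move=> b_lt0; have := ray ((`|a| + 1) / - b).
  rewrite divr_gt0 ?oppr_gt0 ?ltr_pwDr ?ltr01 // => /(_ isT).
  have -> : (`|a| + 1) / - b * b = - (`|a| + 1) by field; rewrite lt_eqF.
  by have := ler_norm a; lra.
Qed.

Lemma conv_lt (l a b y z : R) : 0 <= l -> l <= 1 -> a < y -> b < z ->
  l * a + (1 - l) * b < l * y + (1 - l) * z.
Proof.
move=> l0 l1 ay bz.
have zb : 0 <= (1 - l) * z - (1 - l) * b by rewrite -mulrBr mulr_ge0 ?subr_ge0 // ltW.
have [l_gt0|l_le0] := ltP 0 l.
  have : 0 < l * y - l * a by rewrite -mulrBr mulr_gt0 ?subr_gt0.
  lra.
have -> : l = 0 by apply/eqP; rewrite eq_le l_le0 l0.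
by rewrite !mul0r !add0r subr0 !mul1r.
Qed.

Lemma weighted_sum_lt (I : finType) (lam x y : I -> R) :
  (forall i, 0 <= lam i) -> 0 < \sum_i lam i -> (forall i, x i < y i) ->
  \sum_i lam i * x i < \sum_i lam i * y i.
Proof.
move=> lam0 lam_pos xy; rewrite -subr_gt0 -sumrB.
have term0 i : true -> 0 <= lam i * y i - lam i * x i.
  by rewrite -mulrBr mulr_ge0 // subr_ge0 ltW.
rewrite lt_neqAle sumr_ge0 // andbT; apply/negP => /eqP/esym/(psumr_eq0P term0) term_eq0.
suff lam_eq0 : \sum_i lam i = 0 by rewrite lam_eq0 ltxx in lam_pos.
apply: big1 => i _; have /eqP := term_eq0 i isT.
by rewrite -mulrBr mulf_eq0 subr_eq0 (gt_eqF (xy i)) orbF => /eqP.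
Qed.

End RealInequalities.

Section FanGlicksbergHoffman.
Variables (R : realType) (X : lmodType R) (k : nat) (C : set X) (h : 'I_k -> X -> R).
Variable x0 : X.
Hypotheses (convC : is_convex C) (Cx0 : C x0) (convh : forall j, convex_on C (h j))
  (infeasible : ~ exists2 x, C x & forall j, h j x < 0).

Let U := [set y : 'rV[R]_k | exists2 x, C x & forall j, h j x < y 0 j].
Let u0 : 'rV[R]_k := \row_j (h j x0 + 1).

Let convU : is_convex U.
Proof.
move=> y z l l0 l1 [x Cx xy] [x' Cx' x'z].
exists (l *: x + (1 - l) *: x'); first exact: convC.
move=> j; rewrite !mxE; apply: le_lt_trans (convh j l0 l1 Cx Cx') _.
exact: conv_lt.
Qed.

Let u0_core : icr U u0.
Proof.
split; first by exists x0 => // j; rewrite mxE ltrDl.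
move=> y _; pose S := \sum_j `|y 0 j|.
have S1 : 0 < 1 + S by rewrite ltr_pwDl // sumr_ge0.
exists (1 + S)^-1; split => [|l l0 lS]; first by rewrite invr_gt0.
exists x0 => // j; rewrite !mxE -addrA ltrDl.
have : `|l * y 0 j| < 1.
  rewrite normrM ger0_norm //; apply: le_lt_trans (ler_wpM2r _ lS) _ => //.
  rewrite mulrC ltr_pdivrMr // mul1r /S (bigD1 j) //=.
  have : 0 <= \sum_(i < k | i != j) `|y 0 i| by apply: sumr_ge0.
  lra.
by rewrite ltr_norml => /andP[? _]; lra.
Qed.

Theorem fan_glicksberg_hoffman : exists lam : 'I_k -> R,
  [/\ forall j, 0 <= lam j, 0 < \sum_j lam j & forall x, C x -> 0 <= \sum_j lam j * h j x].
Proof.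
have U0 : ~ U 0.
  by move=> [x Cx hx]; apply: infeasible; exists x => // j; have := hx j; rewrite mxE.
have [f [fu0 fU]] := relative_core_separation convU u0_core U0.
pose lam j := - f 'e_j.
have fE y : - f y = \sum_j lam j * y 0 j.
  rewrite {1}(row_sum_delta y) linear_sum -sumrN; apply: eq_bigr => j _.
  by rewrite linearZ /= /lam mulNr mulrC.
have ray y z : (forall s, 0 < s -> U (y + s *: z)) -> 0 <= - f y /\ 0 <= - f z.
  move=> Uyz; apply: ray_ge0 => s s0; have := fU _ (Uyz s s0).
  rewrite sub0r linearN in fu0; rewrite !linearB linearD linearZ /= mulrN.
  by rewrite -[s *: f z]/(s * f z); lra.
have lam_ge0 j : 0 <= lam j.
  apply: (proj2 (ray u0 'e_j _)) => s s0; exists x0 => // i.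
  rewrite !mxE ltr_wpDr ?ltrDl //; exact: mulr_ge0 (ltW s0) (ler0n _ _).
exists lam; split => //; last move=> x Cx.
- rewrite lt_neqAle sumr_ge0 ?andbT //; apply/negP => /eqP/esym lam_eq0.
  have := fu0; rewrite sub0r linearN fE big1 ?ler10 // => j _.
  by rewrite (psumr_eq0P (fun j _ => lam_ge0 j) lam_eq0) ?mul0r.
- have := proj1 (ray (\row_j h j x) (const_mx 1) _); rewrite fE.
  under eq_bigr do rewrite mxE; apply => s s0.
  by exists x => // j; rewrite !mxE ltrDl mulr1.
Qed.

End FanGlicksbergHoffman.

Lemma compact_finite_subcover (T : ptopologicalType) (S : set T) (O : T -> set T) :
  compact S -> (forall s, S s -> open (O s)) -> (forall s, S s -> O s s) ->
  exists k (s_ : 'I_k -> T), (forall j, S (s_ j)) /\ forall x, S x -> exists j, O (s_ j) x.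
Proof.
move=> Scompact openO selfO.
have := Scompact; rewrite compact_cover => /(_ T S O openO) coverS.
have [D DS DO] := coverS (fun s Ss => ex_intro2 _ _ s Ss (selfO s Ss)).
pose t := in_tuple (finmap.enum_fset D).
exists (size (finmap.enum_fset D)), (tnth t); split.
  by move=> j; apply/set_mem/DS; exact: mem_tnth.
move=> x /DO [s /= Ds Osx]; have /tnthP [j sj] : s \in t by [].
by exists j; rewrite -sj.
Qed.

Lemma continuous_row_comb (R : realType) (n : nat) (w : 'I_n -> R) :
  continuous (fun c : 'rV[R]_n => \sum_(i < n) c ord0 i * w i).
Proof.
apply: continuous_big; first exact: add_continuous.
move=> i _ c; apply: (@continuousM _ _ (fun c : 'rV[R]_n => c ord0 i) (fun _ => w i)).
  exact: coord_continuous.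
exact: cst_continuous.
Qed.

Section StrongSeparation.
Variables (R : realType) (X : lmodType R) (A B : set X) (n : nat) (e : 'I_n -> X).
Variable a0 : X.
Hypotheses (AB0 : A `&` B = set0) (convA : is_convex A) (vclA : vectorially_closed A)
  (a0core : icr A a0) (Bspan : B `<=` lspan [set x | exists i, x = e i])
  (Bcompact : compact [set c : 'rV[R]_n | B (\sum_(i < n) c ord0 i *: e i)]).

Lemma finite_separating_family : exists k (F : 'I_k -> {linear X -> R^o}) (m : 'I_k -> R),
  [/\ forall j, 1 < m j, forall j a, A a -> F j (a - a0) <= 1 &
      forall b, B b -> exists j, m j < F j (b - a0)].
Proof.
pose T (c : 'rV[R]_n) := \sum_(i < n) c ord0 i *: e i.
have sep c : exists F : {linear X -> R^o}, B (T c) ->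
    1 < F (T c - a0) /\ forall a, A a -> F (a - a0) <= 1.
  have [BTc|] := pselect (B (T c)); last by exists \0.
  have AB : ~ A (T c) by move=> ATc; have : (A `&` B) (T c) by []; rewrite AB0.
  by have [F FTc] := vclosed_relative_core_separation convA a0core vclA AB; exists F.
have [F Fsep] := choice sep.
pose m c := (1 + F c (T c - a0)) / 2.
have FT c c' : F c (T c' - a0) = \sum_(i < n) c' ord0 i * F c (e i) - F c a0.
  by rewrite linearB linear_sum; congr (_ - _); apply: eq_bigr => i _; rewrite linearZ.
pose O c := [set c' | m c < F c (T c' - a0)].
have O_open c : B (T c) -> open (O c).
  move=> _; have -> : O c =
      (fun c' => \sum_(i < n) c' ord0 i * F c (e i)) @^-1` [set r | m c + F c a0 < r].
    by apply/seteqP; split => c'; rewrite /O /= FT; lra.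
  by apply: (continuousP _).1; [exact: continuous_row_comb|exact: open_gt].
have O_self c : B (T c) -> O c c by move=> /Fsep [Fc _]; rewrite /O /m /=; lra.
have [k [c_ [Bc_ cover]]] := compact_finite_subcover Bcompact O_open O_self.
exists k, (F \o c_), (m \o c_); split => [j|j a Aa|b Bb] /=.
- by have [+ _] := Fsep _ (Bc_ j); rewrite /m; lra.
- by have [_] := Fsep _ (Bc_ j); apply.
- have [c bE] := lspan_coord (Bspan Bb).
  by have [|j Oc] := cover c; [rewrite /= -bE|exists j; rewrite bE].
Qed.

Lemma strong_separation b0 : is_convex B -> B b0 ->
  exists (f : {linear X -> R^o}) (al be : R),
    [/\ al < be, forall a, A a -> f a <= al & forall b, B b -> be <= f b].
Proof.
move=> convB Bb0.
have [k [F [m [m_gt1 FA FB]]]] := finite_separating_family.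
pose h j x := F j (x - a0) - m j.
have convh j : convex_on B (h j).
  move=> x y l _ _ _ _; rewrite /h !linearB linearD !linearZ /= le_eqVlt; apply/orP; left.
  by apply/eqP; rewrite -[l *: _]/(l * _) -[(1 - l) *: _]/((1 - l) * _); ring.
have infeasible : ~ exists2 b, B b & forall j, h j b < 0.
  by move=> [b Bb hb]; have [j] := FB b Bb; have := hb j; rewrite /h; lra.
have [lam [lam_ge0 lam_gt0 lam_h]] := fan_glicksberg_hoffman convB Bb0 convh infeasible.
have f_lin : linear (fun x => \sum_j lam j * F j x : R^o).
  move=> a x y /=; rewrite scaler_sumr -big_split; apply: eq_bigr => j _.
  by rewrite linearP mulrDr -[a *: F j x]/(a * F j x) mulrCA.
pose f := linear_of f_lin.
exists f, (f a0 + \sum_j lam j), (f a0 + \sum_j lam j * m j); split.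
- rewrite ltrD2l; under eq_bigr do rewrite -[lam _]mulr1.
  exact: weighted_sum_lt.
- move=> a Aa; have : f (a - a0) <= \sum_j lam j.
    by apply: ler_sum => j _; rewrite -[leRHS]mulr1 ler_wpM2l // FA.
  by rewrite linearB /=; lra.
- move=> b Bb; have := lam_h b Bb.
  have -> : \sum_j lam j * h j b = f (b - a0) - \sum_j lam j * m j.
    by rewrite -sumrB; apply: eq_bigr => j _; rewrite /h mulrBr.
  by rewrite linearB /=; lra.
Qed.

End StrongSeparation.

Theorem theorem4p3 (R : realType) (X : lmodType R) (A B : set X)
  (n : nat) (e : 'I_n -> X) :
  A `&` B = set0 ->
  convex_set (A : set (convex_lmodType X)) ->
  convex_set (B : set (convex_lmodType X)) ->
  vectorially_closed A -> relatively_solid A ->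
  (* Y = span of the basis e, a finite-dimensional subspace; B ⊆ Y *)
  lin_indep e ->
  B `<=` lspan [set x | exists i, x = e i] ->
  (* B compact in Y (Euclidean topology, transported through coordinates) *)
  compact [set c : 'rV[R]_n | B (\sum_(i < n) c ord0 i *: e i)] ->
  exists f : {linear X -> R^o},
    (ereal_sup [set ((f a : R)%:E) | a in A] <
     ereal_inf [set ((f b : R)%:E) | b in B])%E.
Proof.
move=> AB0 /is_convex_convex_set convA /is_convex_convex_set convB vclA [a0 a0core] _.
move=> Bspan Bcompact.
have [[b0 Bb0]|B0] := pselect (B !=set0).
- have [f [al [be [al_be fA fB]]]] :=
    strong_separation AB0 convA vclA a0core Bspan Bcompact convB Bb0.
  exists f; apply: (@le_lt_trans _ _ al%:E).
    by apply: ge_ereal_sup => _ [a Aa <-]; rewrite lee_fin fA.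
  apply: (@lt_le_trans _ _ be%:E); first by rewrite lte_fin.
  by apply: le_ereal_inf_tmp => _ [b Bb <-]; rewrite lee_fin fB.
- exists \0; have -> : B = set0 by apply/seteqP; split => // b Bb; apply: B0; exists b.
  rewrite image_set0 ereal_inf0; apply: (@le_lt_trans _ _ 0%:E); last exact: ltry.
  by apply: ge_ereal_sup => _ [a _ <-].
Qed.
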